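(* Let $\Omega\subseteq\mathbb{R}^d$ be open and work in the ultrapower described in the context with $\rho=\langle R_\varphi\rangle$. Then: (i) for $(f_\varphi)\in\mathcal{E}(\Omega)^{\mathcal{D}_0}$, $(f_\varphi)\in\mathcal{M}(\mathcal{E}(\Omega)^{\mathcal{D}_0})$ if and only if $\langle f_\varphi\rangle\in\mathcal{M}_\rho({}^*\mathcal{E}(\Omega))$; (ii) the map $\widehat{f_\varphi}\mapsto\widehat{\langle f_\varphi\rangle}$ is a well-defined isomorphism of differential algebras from $\widehat{\mathcal{E}(\Omega)^{\mathcal{D}_0}}$ onto ${}^\rho\mathcal{E}(\Omega)$.
   Context: Fix $\mathcal{D}_0=\mathcal{D}(\mathbb{R}^d)$. For $\varphi\in\mathcal{D}_0$ let $R_\varphi=\sup\{\|x\|:\varphi(x)\neq0\}$ if $\varphi\neq0$, $R_0=1$. For $n\in\mathbb{N}$, $\mathcal{D}_n$ is the set of $\varphi\in\mathcal{D}_0$ that are real-valued, even, with $R_\varphi\le1/n$, $\int\varphi=1$, $\int x^\alpha\varphi(x)dx=0$ for $1\le|\alpha|\le n$, $\int|\varphi|\le1+1/n$, and $\sup_x|\partial^\alpha\varphi(x)|\le R_\varphi^{-2(|\alpha|+d)}$ for $|\alpha|\le n$. $\mathcal{U}$ is a fixed free $\mathfrak c^+$-good ultrafilter on $\mathcal{D}_0$ containing every $\mathcal{D}_n$; ''a.e.'' means on a set belonging to $\mathcal U$. Asymptotic functions: $\mathcal{E}(\Omega)=C^\infty(\Omega;\mathbb{C})$; $\mathcal{M}(\mathcal{E}(\Omega)^{\mathcal{D}_0})$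 = nets $(f_\varphi)$ in $\mathcal{E}(\Omega)$ such that for every compact $K\subset\Omega$ and $\alpha\in\mathbb{N}_0^d$ there is $m$ with $\sup_K|\partial^\alpha f_\varphi|\le R_\varphi^{-m}$ a.e.; $\mathcal{N}$ = nets with $\sup_K|\partial^\alpha f_\varphi|\le R_\varphi^{p}$ a.e. for all $K,\alpha,p\in\mathbb{N}$; $\widehat{\mathcal{E}(\Omega)^{\mathcal{D}_0}}=\mathcal{M}/\mathcal{N}$ with pointwise (in $\varphi$) operations and derivatives. Ultrapower (distributional non-standard model): two nets are equivalent if they agree a.e.; ${}^*\mathbb{R}$, ${}^*\mathbb{C}$, ${}^*\mathbb{R}^d$, ${}^*\mathcal{E}(\Omega)$ are the sets of classes $\langle\cdot\rangle$ of nets in $\mathbb{R},\mathbb{C},\mathbb{R}^d,\mathcal{E}(\Omega)$; ${}^*\Omega$ = classes of nets $(x_\varphi)$ with $x_\varphi\in\Omega$ a.e.; for $f=\langle f_\varphi\rangle$ and $\xi=\langle x_\varphi\rangle\in{}^*\Omega$, $f(\xi)=\langle f_\varphi(x_\varphi)\rangle$ and $\partial^\alpha f=\langle\partial^\alpha f_\varphi\rangle$; order and absolute values componentwise a.e.; standard objects embedded by constant nets. $\rho=\langle R_\varphi\rangle$. $\mathcal{M}_\rho({}^*\mathbb{C})=\{\zeta:|\zeta|\le\rho^{-m}\text{ some }m\in\mathbb{N}\}$, $\mathcal{N}_\rho({}^*\mathbb{C})=\{\zeta:|\zeta|<\rho^n\ \forall n\in\mathbb{N}\}$. $\mu(\Omega)=\{x+dx:x\in\Omega,\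 dx\in{}^*\mathbb{R}^d,\ \|dx\|<1/n\ \forall n\in\mathbb{N}\}$. $\mathcal{M}_\rho({}^*\mathcal{E}(\Omega))=\{f\in{}^*\mathcal{E}(\Omega):\partial^\alpha f(x)\in\mathcal{M}_\rho({}^*\mathbb{C})\ \forall\alpha\in\mathbb{N}_0^d,\ \forall x\in\mu(\Omega)\}$, $\mathcal{N}_\rho({}^*\mathcal{E}(\Omega))$ likewise with $\mathcal{N}_\rho({}^*\mathbb{C})$; ${}^\rho\mathcal{E}(\Omega)=\mathcal{M}_\rho({}^*\mathcal{E}(\Omega))/\mathcal{N}_\rho({}^*\mathcal{E}(\Omega))$ with classes $\widehat f$. *)

From mathcomp Require Import all_boot all_algebra all_classical all_reals all_analysis.
From mathcomp Require Import complex.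
Import GRing.Theory Num.Theory.
Import numFieldNormedType.Exports.
Set Implicit Arguments. Unset Strict Implicit. Unset Printing Implicit Defensive.
Local Open Scope classical_set_scope.
Local Open Scope ring_scope.

Section AsymptoticFunctions.
Variables (R : realType) (d : nat).

Notation Rd := 'rV[R]_d.

Definition enorm (x : Rd) : R := Num.sqrt (\sum_(i < d) (x ord0 i) ^+ 2).

Definition cnorm (z : R[i]) : R := Num.sqrt (complex.Re z ^+ 2 + complex.Im z ^+ 2).

Definition unitv (j : 'I_d) : Rd := \row_(k < d) (k == j)%:R.

(* partial derivative d/dx_j of a complex-valued function (componentwise on
   real and imaginary parts); functions on an open set are represented by
   total functions on R^d, only their values on the open set matter. *)
Definition pd (j : 'I_d) (f : Rd -> R[i]) : Rd -> R[i] :=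
  fun x => Complex ('D_(unitv j) (fun y => complex.Re (f y)) x)
                   ('D_(unitv j) (fun y => complex.Im (f y)) x).

Definition pds (s : seq 'I_d) (f : Rd -> R[i]) : Rd -> R[i] :=
  foldr pd f s.

Definition mindex := 'I_d -> nat.
Definition mlen (a : mindex) : nat := (\sum_(j < d) a j)%N.
Definition pda (a : mindex) (f : Rd -> R[i]) : Rd -> R[i] :=
  foldr (fun j g => iter (a j) (pd j) g) f (enum 'I_d).

Definition smooth_on (O : set Rd) (f : Rd -> R[i]) : Prop :=
  forall (s : seq 'I_d) (x : Rd), O x ->
    {for x, continuous (fun y : Rd => complex.Re (pds s f y))} /\
    {for x, continuous (fun y : Rd => complex.Im (pds s f y))} /\
    forall j : 'I_d,
      derivable (fun y => complex.Re (pds s f y)) x (unitv j) /\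
      derivable (fun y => complex.Im (pds s f y)) x (unitv j).

Definition testfun (phi : Rd -> R[i]) : Prop :=
  smooth_on setT phi /\ compact (closure [set x | phi x != 0]).

Definition D0 : Type := {phi : Rd -> R[i] | testfun phi}.

Definition Rphi (phi : D0) : R :=
  if `[< exists x, sval phi x != 0 >]
  then sup [set enorm x | x in [set x | sval phi x != 0]]
  else 1.

(* Lebesgue integral over R^d of a (continuous, compactly supported) real
   function, written as the iterated one-dimensional Lebesgue integral
   (Fubini) over the coordinates in order *)
Definition setcoord (x : Rd) (j : 'I_d) (t : R) : Rd :=
  \row_(k < d) (if k == j then t else x ord0 k).
Fixpoint iint_from (l : seq 'I_d) (g : Rd -> R) (x : Rd) : R :=
  match l with
  | [::] => g x
  | j :: l' => Rintegral (@lebesgue_measure R) setT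
                 (fun t => iint_from l' g (setcoord x j t))
  end.
Definition integral_Rd (g : Rd -> R) : R := iint_from (enum 'I_d) g 0.

Definition xpow (a : mindex) (x : Rd) : R := \prod_(j < d) (x ord0 j) ^+ (a j).

Definition Dn (n : nat) : set D0 := fun phi =>
  let f := sval phi in
  (forall x, complex.Im (f x) = 0) /\
  (forall x, f (- x) = f x) /\
  Rphi phi <= n%:R^-1 /\
  integral_Rd (fun x => complex.Re (f x)) = 1 /\
  (forall a : mindex, (1 <= mlen a <= n)%N ->
     integral_Rd (fun x => xpow a x * complex.Re (f x)) = 0) /\
  integral_Rd (fun x => `|complex.Re (f x)|) <= 1 + n%:R^-1 /\
  (forall a : mindex, (mlen a <= n)%N ->
     forall x, cnorm (pda a f x) <= Rphi phi ^- (2 * (mlen a + d))).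

End AsymptoticFunctions.

Definition ultrafilter_on (I : Type) (U : set (set I)) : Prop :=
  U setT /\ ~ U set0 /\
  (forall A B, U A -> U B -> U (A `&` B)) /\
  (forall A B, A `<=` B -> U A -> U B) /\
  (forall A, U A \/ U (~` A)).

Definition free_filter (I : Type) (U : set (set I)) : Prop :=
  forall i : I, exists A, U A /\ ~ A i.

(* c^+-good (Keisler): for every index set L of cardinality <= c (i.e.
   injecting into R) every anti-monotone map from finite subsets of L to U
   has a multiplicative refinement in U *)
Definition cplus_good (R : realType) (I : Type) (U : set (set I)) : Prop :=
  forall (L : Type) (inj : L -> R), injective inj ->
  forall f : set L -> set I,
    (forall s, finite_set s -> U (f s)) ->
    (forall s t, finite_set s -> finite_set t -> s `<=` t -> f t `<=` f s) ->
    exists g : set L -> set I,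
      (forall s, finite_set s -> U (g s) /\ g s `<=` f s) /\
      (forall s t, finite_set s -> finite_set t -> g (s `|` t) = g s `&` g t).

Section Ultrapower.
Variables (R : realType) (d : nat) (U : set (set (D0 R d))).
Notation Rd := 'rV[R]_d.
Notation D0 := (D0 R d).

Definition ae (P : D0 -> Prop) : Prop := U [set phi | P phi].

Definition net := D0 -> Rd -> R[i].
Definition net_in_E (O : set Rd) (f : net) : Prop :=
  forall phi, smooth_on O (f phi).

Definition moderate (O : set Rd) (f : net) : Prop :=
  forall K : set Rd, compact K -> K `<=` O -> forall a : mindex d,
  exists m : nat, (0 < m)%N /\
    ae (fun phi => forall x, K x -> cnorm (pda a (f phi) x) <= Rphi phi ^- m).

Definition negligible (O : set Rd) (f : net) : Prop :=
  forall K : set Rd, compact K -> K `<=` O -> forall a : mindex d,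
  forall p : nat, (0 < p)%N ->
    ae (fun phi => forall x, K x -> cnorm (pda a (f phi) x) <= Rphi phi ^+ p).

Definition net_add (f g : net) : net := fun phi x => f phi x + g phi x.
Definition net_sub (f g : net) : net := fun phi x => f phi x - g phi x.
Definition net_mul (f g : net) : net := fun phi x => f phi x * g phi x.
Definition net_scale (c : R[i]) (f : net) : net := fun phi x => c * f phi x.
Definition net_one : net := fun phi x => 1.
Definition net_pd (j : 'I_d) (f : net) : net := fun phi => pd j (f phi).

(* Ultrapower.  An element of *X is the class <x_phi> of a net (x_phi); all
   operations/predicates below are defined on representatives, componentwise
   and a.e., as in the context.  *)
(* <f_phi> as an element of *E(Omega) is represented by the net itself *)
Definition up (f : net) : D0 -> Rd -> R[i] := f.
Definition up_add (F G : D0 -> Rd -> R[i]) := fun phi x => F phi x + G phi x.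
Definition up_sub (F G : D0 -> Rd -> R[i]) := fun phi x => F phi x - G phi x.
Definition up_mul (F G : D0 -> Rd -> R[i]) := fun phi x => F phi x * G phi x.
Definition up_scale (c : R[i]) (F : D0 -> Rd -> R[i]) := fun phi x => c * F phi x.
Definition up_one : D0 -> Rd -> R[i] := fun phi x => 1.
Definition up_pd (j : 'I_d) (F : D0 -> Rd -> R[i]) := fun phi => pd j (F phi).
Definition up_pda (a : mindex d) (F : D0 -> Rd -> R[i]) := fun phi => pda a (F phi).
Definition up_eval (F : D0 -> Rd -> R[i]) (xi : D0 -> Rd) : D0 -> R[i] :=
  fun phi => F phi (xi phi).

Definition infinitesimal (dx : D0 -> Rd) : Prop :=
  forall n : nat, ae (fun phi => enorm (dx phi) < (n.+1)%:R^-1).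
Definition in_mu (O : set Rd) (xi : D0 -> Rd) : Prop :=
  exists x dx, O x /\ infinitesimal dx /\ ae (fun phi => xi phi = x + dx phi).

Definition Mrho_C (z : D0 -> R[i]) : Prop :=
  exists m : nat, (0 < m)%N /\ ae (fun phi => cnorm (z phi) <= Rphi phi ^- m).
Definition Nrho_C (z : D0 -> R[i]) : Prop :=
  forall n : nat, (0 < n)%N -> ae (fun phi => cnorm (z phi) < Rphi phi ^+ n).

Definition Mrho_E (O : set Rd) (F : D0 -> Rd -> R[i]) : Prop :=
  forall (a : mindex d) (xi : D0 -> Rd), in_mu O xi -> Mrho_C (up_eval (up_pda a F) xi).
Definition Nrho_E (O : set Rd) (F : D0 -> Rd -> R[i]) : Prop :=
  forall (a : mindex d) (xi : D0 -> Rd), in_mu O xi -> Nrho_C (up_eval (up_pda a F) xi).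

(* equality in the quotients:
   hat f = hat g in E^(Omega)^{D0}   iff f - g in N,
   hat F = hat G in ^rho E(Omega)     iff F - G in N_rho( *E(Omega) ) *)
Definition hat_eq (O : set Rd) (f g : net) : Prop := negligible O (net_sub f g).
Definition rhohat_eq (O : set Rd) (F G : D0 -> Rd -> R[i]) : Prop :=
  Nrho_E O (up_sub F G).

End Ultrapower.

From Pilot Require Import Defs.
From mathcomp Require Import all_boot all_algebra all_classical all_reals all_analysis.
From mathcomp Require Import complex.
Import GRing.Theory Num.Theory.
Import order.Order.TTheory.
Import numFieldNormedType.Exports.
Local Open Scope classical_set_scope.
Local Open Scope ring_scope.

(* Evaluation of <f_phi> and of all its derivatives at a point <x_phi> is done
   representative-wise, so (i) and its analogue for negligible nets are transfer
   statements between bounds holding a.e. on compact subsets of Omega and bounds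
   at the points of mu(Omega).  A point of mu(Omega) lies a.e. in a closed ball
   contained in Omega, which gives one direction.  Conversely, a net with values
   in a compact K inside Omega converges along the ultrafilter to a point of K,
   hence is a point of mu(Omega); if a bound failed on K for U-many phi, picking
   for each phi a point of K where it fails gives a point of mu(Omega) violating
   it.  For moderateness the exponent may depend on the point; this is defeated
   by picking for each phi the largest failing exponent below 1/R_phi, which
   tends to infinity along U because U contains every D_n.  The map of (ii) is
   the identity on representatives, so it commutes with the operations of the
   differential algebra exactly. *)

Set Implicit Arguments.
Unset Strict Implicit.
Unset Printing Implicit Defensive.

Section UltrafilterFacts.
Variables (I : Type) (U : set_system I).
Hypothesis U_ultra : ultrafilter_on U.

Lemma ultrafilter_proper : ProperFilter U.
Proof.
case: U_ultra => UT [U0 [UI [US _]]].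
by split=> //; split=> // A B; exact: US.
Qed.

#[local] Existing Instance ultrafilter_proper.

Lemma ultrafilterN (A : set I) : ~ U A -> U (~` A).
Proof. by case: U_ultra => _ [_ [_ [_ /(_ A)]]] []. Qed.

Lemma ultrafilter_cvg_compact (T : topologicalType) (K : set T) (x : I -> T) :
  compact K -> (forall i, K (x i)) -> exists2 c, K c & fmap x U --> c.
Proof.
move=> cK Kx; have [c [Kc Uc]] : K `&` cluster (fmap x U) !=set0.
  have PF : ProperFilter (fmap x U) by exact: fmap_proper_filter.
  by apply: (cK _ PF) => /=; apply: filterE.
exists c => //; move=> A cA; apply: contrapT => nUA.
have [y [nAy Ay]] := Uc (~` A) _ (ultrafilterN (A := x @^-1` A) nUA) cA.
exact: nAy.
Qed.

Lemma ultrafilter_forall_in (T : choiceType) (K : set T) (P : I -> T -> Prop) :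
  (forall x : I -> T, (forall i, K (x i)) -> \forall i \near U, P i (x i)) ->
  \forall i \near U, forall y, K y -> P i y.
Proof.
move=> hK; have [[k Kk]|K0] := pselect (K !=set0); last first.
  by apply: filterE => i y Ky; exfalso; apply: K0; exists y.
apply: contrapT => /ultrafilterN bad.
pose x i := xget k (K `&` [set y | ~ P i y]).
have Kx i : K (x i).
  by rewrite /x; case: xgetP => [y -> []//|_]; exact: Kk.
apply: (@filter_not_empty _ U); apply: filterS2 bad (hK x Kx) => i /= nP Px.
apply: nP => y Ky; apply: contrapT => nPy.
by move: Px; rewrite /x; case: xgetP => [z -> [_ nPz] //|/(_ y)[]].
Qed.

Lemma filter_diagonal (F : set_system I) {FF : Filter F}
    (B : nat -> I -> Prop) (N : I -> nat) :
  (forall m, \forall i \near F, B m i /\ (m <= N i)%N) ->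
  exists k : I -> nat, forall m, \forall i \near F, (m <= k i)%N /\ B (k i) i.
Proof.
move=> hB; pose A i := [pred j : 'I_(N i).+1 | `[< B j i >]].
exists (fun i => \max_(j in A i) j)%N => m; apply: filterS (hB m) => i [Bmi mN].
have mN1 : (m < (N i).+1)%N by [].
have Am : Ordinal mN1 \in A i by exact/asboolP.
split; first exact: (leq_bigmax_cond _ Am).
have [j + ->] := eq_bigmax_cond (fun j : 'I_(N i).+1 => nat_of_ord j)
  (ltac:(by apply/card_gt0P; exists (Ordinal mN1)) : (0 < #|A i|)%N).
by move=> /asboolP.
Qed.

End UltrafilterFacts.

Section EuclideanNorm.
Variables (R : realType) (d : nat).
Implicit Type v : 'rV[R]_d.

Lemma coord_le_enorm v j : `|v ord0 j| <= enorm v.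
Proof.
rewrite /enorm -sqrtr_sqr ler_sqrt; last by apply: sumr_ge0 => i _; exact: sqr_ge0.
by rewrite (bigD1 j) //= lerDl; apply: sumr_ge0 => i _; exact: sqr_ge0.
Qed.

Lemma mx_norm_le_enorm v : `|v| <= enorm v.
Proof.
rewrite -[`|v|]/(mx_norm v) mx_normrE; apply: bigmax_le => [|[i j] _].
  exact: sqrtr_ge0.
by rewrite (ord1 i); exact: coord_le_enorm.
Qed.

Lemma enorm_le_mx_norm v : enorm v <= d%:R * `|v|.
Proof.
have coord_le j : `|v ord0 j| <= `|v|.
  rewrite -[`|v|]/(mx_norm v) mx_normrE.
  exact: (le_bigmax _ _ (ord0, j)).
rewrite /enorm -[X in _ <= X]ger0_norm ?mulr_ge0 // -sqrtr_sqr ler_sqrt ?sqr_ge0 //.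
apply: (@le_trans _ _ (\sum_(j < d) `|v|^+2)).
  by apply: ler_sum => j _; rewrite -real_normK ?num_real // lerXn2r ?nnegrE.
rewrite sumr_const card_ord -[X in X <= _]mulr_natl exprMn ler_wpM2r ?sqr_ge0 //.
rewrite -natrX ler_nat; case: d {v coord_le} => // n.
by rewrite expnS leq_pmulr // expn_gt0.
Qed.

Lemma closed_ball_rV_compact (x : 'rV[R]_d) (r : R) :
  0 < r -> compact (closed_ball x r).
Proof.
move=> r_gt0; apply: bounded_closed_compact; last exact: closed_ball_closed.
rewrite closed_ballE //; exists (`|x| + r); split; first exact: num_real.
move=> M xrM y /= xyr; apply/ltW/(le_lt_trans _ xrM).
by rewrite -[y](subKr x) (le_trans (ler_normB _ _)) // lerD2l.
Qed.

End EuclideanNorm.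

Section TestFunctions.
Variables (R : realType) (d : nat).
Notation Rd := 'rV[R]_d.

Lemma cnorm0 : cnorm (0 : R[i]) = 0.
Proof. by rewrite /cnorm /= expr0n addr0 sqrtr0. Qed.

Lemma normr_Re_le_cnorm (z : R[i]) : `|complex.Re z| <= cnorm z.
Proof. by rewrite /cnorm -sqrtr_sqr ler_sqrt ?addr_ge0 ?sqr_ge0 // lerDl sqr_ge0. Qed.

Lemma pda0 (f : Rd -> R[i]) : pda (fun _ => 0%N) f = f.
Proof. by rewrite /pda; elim: (enum 'I_d) => //= j s ->. Qed.

Lemma pda_cst0 (a : mindex d) : pda a (fun _ : Rd => 0) = (fun _ => 0).
Proof.
have pd_cst0 j : pd j (fun _ : Rd => 0) = (fun _ => 0).
  by apply: funext => x; rewrite /pd /= !derive_cst.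
rewrite /pda; elim: (enum 'I_d) => //= j s ->.
by elim: (a j) => //= k ->.
Qed.

Lemma integral_Rd0 : integral_Rd (fun _ : Rd => 0) = 0.
Proof.
rewrite /integral_Rd; elim: (enum 'I_d) (0 : Rd) => //= j l IH x.
under eq_fun do rewrite IH.
by rewrite /Rintegral integral0_eq.
Qed.

Lemma Rphi_ge0 (phi : D0 R d) : 0 <= Rphi phi.
Proof.
rewrite /Rphi; case: asboolP => // -[x phix].
set S := [set enorm y | y in [set y | sval phi y != 0]].
have [supS|/sup_out->//] := pselect (has_sup S).
apply: le_trans (sup_upper_bound supS (ex_intro2 _ _ x phix erefl)).
exact: sqrtr_ge0.
Qed.

Lemma Dn_Rphi_gt0 n (phi : D0 R d) : (0 < d)%N -> Dn n phi -> 0 < Rphi phi.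
Proof.
move=> d_gt0 [_ [_ [_ [int1 [_ [_ derb]]]]]].
rewrite lt_def Rphi_ge0 andbT; apply/eqP => R0.
have Re0 x : complex.Re (sval phi x) = 0.
  have mlen0 : mlen (fun _ : 'I_d => 0%N) = 0%N by rewrite /mlen big1.
  have := derb (fun _ => 0%N) ltac:(by rewrite mlen0) x.
  rewrite pda0 R0 mlen0 add0n expr0n muln_eq0 /= eqn0Ngt d_gt0 invr0 => le0.
  by apply/normr0_eq0/eqP; rewrite eq_le normr_ge0 (le_trans (normr_Re_le_cnorm _)).
move: int1; under eq_fun do rewrite Re0.
by rewrite integral_Rd0 => /eqP; rewrite eq_sym oner_eq0.
Qed.

Lemma Dn1_dim0 (phi : D0 R 0) : Dn 1 phi -> sval phi = fun _ => 1.
Proof.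
case: phi => f f_test /= [Im0 [_ [_ [int1 _]]]].
have enum0 : enum 'I_0 = [::] by apply: size0nil; rewrite size_enum_ord.
move: int1; rewrite /integral_Rd enum0 /= => Re1.
apply: funext => x; rewrite (thinmx0 x).
by move: (Im0 0) Re1 => /=; case: (f 0) => a b /= -> ->.
Qed.

Lemma Dn1_dim0_eq (phi psi : D0 R 0) :
  Dn 1 phi -> Dn 1 psi -> phi = psi.
Proof.
move=> /Dn1_dim0 phi1 /Dn1_dim0 psi1.
by apply: eq_sig_hprop => [f p q|]; [exact: Prop_irrelevance | rewrite phi1 psi1].
Qed.

End TestFunctions.

(* On R^0 the "integral" is evaluation at the only point, so D_1 is the single
   test function 1, and a free ultrafilter cannot contain a singleton. *)
Lemma free_ultrafilter_dim_gt0 (R : realType) (d : nat) (U : set_system (D0 R d)) :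
  ultrafilter_on U -> free_filter U -> U (Dn 1) -> (0 < d)%N.
Proof.
case: d U => [|//] U U_ultra U_free UD1; have U_proper := ultrafilter_proper U_ultra.
have [phi D1phi] := filter_ex UD1; have [A [UA Aphi]] := U_free phi.
have [psi [D1psi Apsi]] := filter_ex (filterI UD1 UA).
by case: Aphi; rewrite (Dn1_dim0_eq D1phi D1psi).
Qed.

Section Transfer.
Variables (R : realType) (d : nat) (U : set_system (D0 R d)).
Hypotheses (U_ultra : ultrafilter_on U) (U_free : free_filter U)
  (U_Dn : forall n : nat, U (Dn n.+1)).
Notation Rd := 'rV[R]_d.

#[local] Instance U_proper : ProperFilter U := ultrafilter_proper U_ultra.

Lemma ae_Rphi_le n :
  \forall phi \near U, 0 < Rphi phi /\ Rphi phi <= n.+1%:R^-1.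
Proof.
have d_gt0 := free_ultrafilter_dim_gt0 U_ultra U_free (U_Dn 0).
apply: filterS (U_Dn n) => phi Dphi; split; first exact: Dn_Rphi_gt0 Dphi.
by case: Dphi => _ [_ []].
Qed.

Lemma ae_Rphi_lt1 : \forall phi \near U, 0 < Rphi phi < 1.
Proof.
apply: filterS (ae_Rphi_le 1) => phi [R0 R1]; rewrite R0 (le_lt_trans R1) //.
by rewrite invf_lt1 ?ltr1n.
Qed.

Lemma in_mu_compact (O : set Rd) (xi : D0 R d -> Rd) : open O -> in_mu U O xi ->
  exists K, [/\ compact K, K `<=` O & \forall phi \near U, K (xi phi)].
Proof.
move=> O_open [x [dx [Ox [dx0 xiE]]]].
have /nbhs_ballP [e e_gt0 eO] : nbhs x O by exact: open_nbhs_nbhs.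
have e2_gt0 : 0 < e / 2 by rewrite divr_gt0.
exists (closed_ball x (e / 2)); split; first exact: closed_ball_rV_compact.
  apply: subset_trans eO; apply: closed_ball_subset => //.
  by rewrite ltr_pdivrMr // ltr_pMr // ltr1n.
apply: filterS2 xiE (dx0 (Num.truncn (e / 2)^-1)) => phi -> dx_small.
apply: subset_closed_ball; rewrite -ball_normE /ball_ /= opprD addNKr normrN.
apply: le_lt_trans (mx_norm_le_enorm _) (lt_le_trans dx_small _).
by rewrite -[X in _ <= X]invrK lef_pV2 ?posrE ?invr_gt0 // ltW // truncnS_gt.
Qed.

Lemma in_mu_of_compact (O K : set Rd) (x : D0 R d -> Rd) :
  compact K -> K `<=` O -> (forall phi, K (x phi)) -> in_mu U O x.
Proof.
move=> K_compact KO Kx.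
have [c Kc xc] := ultrafilter_cvg_compact U_ultra K_compact Kx.
exists c, (fun phi => x phi - c); split; first exact: KO.
split; last by apply: nearW => phi /=; rewrite addrC subrK.
move=> n; pose t : R := n.+1%:R^-1.
have t_gt0 : 0 < t by rewrite invr_gt0.
have eps_gt0 : 0 < t / d.+1%:R by rewrite divr_gt0.
have x_near_c : \forall phi \near U, ball c (t / d.+1%:R) (x phi).
  by move/fcvg_ballP : xc => /(_ _ eps_gt0).
apply: filterS x_near_c => phi.
rewrite -ball_normE /ball_ /= distrC => xc_small.
apply: le_lt_trans (enorm_le_mx_norm _) _.
apply: le_lt_trans (ler_wpM2l (ler0n _ _) (ltW xc_small)) _.
by rewrite mulrCA gtr_pMr // ltr_pdivrMr // mul1r ltr_nat.
Qed.

Lemma moderate_Mrho_E (O : set Rd) (f : net R d) :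
  open O -> moderate U O f -> Mrho_E U O f.
Proof.
move=> O_open f_mod a xi /(in_mu_compact O_open)[K [K_compact KO xiK]].
have [m [m_gt0 fK]] := f_mod K K_compact KO a.
by exists m; split => //; apply: filterS2 xiK fK => phi Kxi; apply.
Qed.

Lemma negligible_Nrho_E (O : set Rd) (f : net R d) :
  open O -> Defs.negligible U O f -> Nrho_E U O f.
Proof.
move=> O_open f_neg a xi /(in_mu_compact O_open)[K [K_compact KO xiK]] n n_gt0.
apply: filterS3 xiK (f_neg K K_compact KO a n.+1 isT) ae_Rphi_lt1.
move=> phi Kxi /(_ _ Kxi) fK /andP[R0 R1]; apply: le_lt_trans fK _.
by rewrite exprS gtr_pMl // exprn_gt0.
Qed.

Lemma Nrho_E_negligible (O : set Rd) (f : net R d) :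
  Nrho_E U O f -> Defs.negligible U O f.
Proof.
move=> f_Nrho K K_compact KO a p p_gt0.
apply: (ultrafilter_forall_in U_ultra
  (P := fun phi y => cnorm (pda a (f phi) y) <= Rphi phi ^+ p)) => x Kx.
apply: filterS (f_Nrho a x (in_mu_of_compact K_compact KO Kx) p p_gt0) => phi.
exact: ltW.
Qed.

Lemma Mrho_E_moderate (O : set Rd) (f : net R d) :
  Mrho_E U O f -> moderate U O f.
Proof.
move=> f_Mrho K K_compact KO a; apply: contrapT => f_not_mod.
(* Exponents are shifted by one to keep them positive, as [moderate] demands. *)
pose B m phi := exists2 y, K y & Rphi phi ^- m.+1 < cnorm (pda a (f phi) y).
have [k k_large] : exists k : D0 R d -> nat,
    forall m, \forall phi \near U, (m <= k phi)%N /\ B (k phi) phi.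
  apply: (@filter_diagonal _ U _ B (fun phi => Num.truncn (Rphi phi)^-1)) => m.
  have /(ultrafilterN U_ultra) : ~ \forall phi \near U,
      forall y, K y -> cnorm (pda a (f phi) y) <= Rphi phi ^- m.+1.
    by move=> fK; apply: f_not_mod; exists m.+1.
  move=> not_fK; apply: filterS2 (ae_Rphi_le m) not_fK => phi [R0 Rm] not_fKphi.
  split.
    apply: contrapT => not_B; apply: not_fKphi => y Ky; rewrite leNgt.
    by apply/negP => fy; apply: not_B; exists y.
  rewrite truncn_ge_nat ?invr_ge0 ?ltW // (@lt_le_trans _ _ m.+1%:R) ?ltr_nat //.
  by rewrite -[X in X <= _]invrK lef_pV2 ?posrE ?invr_gt0.
have : \forall phi \near U,
    forall y, K y -> cnorm (pda a (f phi) y) <= Rphi phi ^- (k phi).+1.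
  apply: (ultrafilter_forall_in U_ultra
    (P := fun phi y => cnorm (pda a (f phi) y) <= Rphi phi ^- (k phi).+1)) => x Kx.
  have [m [m_gt0 fx]] := f_Mrho a x (in_mu_of_compact K_compact KO Kx).
  apply: filterS3 fx (k_large m) ae_Rphi_lt1 => phi fxm [mk _] /andP[R0 R1].
  apply: le_trans fxm _; rewrite lef_pV2 ?posrE ?exprn_gt0 //.
  by apply: ler_wiXn2l; rewrite ?ltW // leqW.
move=> fK; apply: (@filter_not_empty _ U _).
apply: filterS2 fK (k_large 0) => phi fK [_ [y Ky fy]].
by move: (lt_le_trans fy (fK y Ky)); rewrite ltxx.
Qed.

Lemma moderate_iff_Mrho_E (O : set Rd) (f : net R d) :
  open O -> moderate U O f <-> Mrho_E U O f.
Proof. by move=> O_open; split; [exact: moderate_Mrho_E | exact: Mrho_E_moderate]. Qed.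

Lemma negligible_iff_Nrho_E (O : set Rd) (f : net R d) :
  open O -> Defs.negligible U O f <-> Nrho_E U O f.
Proof.
by move=> O_open; split; [exact: negligible_Nrho_E | exact: Nrho_E_negligible].
Qed.

Lemma negligible_cst0 (O : set Rd) (f : net R d) :
  (forall phi x, f phi x = 0) -> Defs.negligible U O f.
Proof.
move=> f0 K _ _ a p _; apply: nearW => phi x _.
have -> : f phi = fun _ => 0 by apply: funext; exact: f0.
by rewrite pda_cst0 cnorm0 exprn_ge0 ?Rphi_ge0.
Qed.

End Transfer.

Theorem theorem7p12 (R : realType) (d : nat) (U : set (set (D0 R d)))
  (U_ultra : ultrafilter_on U) (U_free : free_filter U)
  (U_good : cplus_good R U) (U_Dn : forall n : nat, U (Dn n.+1))
  (O : set 'rV[R]_d) (O_open : open O) :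
  (* (i) *)
  (forall f : net R d, net_in_E O f ->
     (moderate U O f <-> Mrho_E U O (up f))) /\
  (* (ii) the map  hat f |-> hat <f>  from M/N to M_rho/N_rho ... *)
  (* ... maps M into M_rho *)
  (forall f : net R d, net_in_E O f -> moderate U O f -> Mrho_E U O (up f)) /\
  (* ... is well defined *)
  (forall f g : net R d, net_in_E O f -> net_in_E O g ->
     moderate U O f -> moderate U O g ->
     hat_eq U O f g -> rhohat_eq U O (up f) (up g)) /\
  (* ... is injective *)
  (forall f g : net R d, net_in_E O f -> net_in_E O g ->
     moderate U O f -> moderate U O g ->
     rhohat_eq U O (up f) (up g) -> hat_eq U O f g) /\
  (* ... is surjective onto ^rho E(Omega) *)
  (forall F : net R d, net_in_E O F -> Mrho_E U O F ->
     exists f : net R d, [/\ net_in_E O f, moderate U O f &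
                             rhohat_eq U O (up f) F]) /\
  (* ... and is a homomorphism of differential algebras *)
  (forall f g : net R d, net_in_E O f -> net_in_E O g ->
     moderate U O f -> moderate U O g ->
     [/\ rhohat_eq U O (up (net_add f g)) (up_add (up f) (up g)),
         rhohat_eq U O (up (net_mul f g)) (up_mul (up f) (up g)),
         (forall c : R[i], rhohat_eq U O (up (net_scale c f)) (up_scale c (up f))),
         rhohat_eq U O (up (@net_one R d)) (@up_one R d) &
         (forall j : 'I_d, rhohat_eq U O (up (net_pd j f)) (up_pd j (up f)))]).
Proof.
have modE f := moderate_iff_Mrho_E U_ultra U_free U_Dn f O_open.
have negE f := negligible_iff_Nrho_E U_ultra U_free U_Dn f O_open.
have rhohat_eq_pointwise (F G : net R d) :
    (forall phi x, F phi x = G phi x) -> rhohat_eq U O F G.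
  move=> FG; apply/negE/(negligible_cst0 U_ultra) => phi x.
  by apply/eqP; rewrite subr_eq0 FG.
split; first by move=> f _; exact: modE.
split; first by move=> f _ /modE.
split; first by move=> f g _ _ _ _ /negE.
split; first by move=> f g _ _ _ _ /negE.
split; first by move=> F F_E /modE F_mod; exists F; split => //; exact: rhohat_eq_pointwise.
by move=> f g *; split=> *; exact: rhohat_eq_pointwise.
Qed.
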